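(* Let $1<p<2$ and let $A,B$ be finite-dimensional Hilbert spaces with orthonormal bases $\{|j\rangle\}$ of $A$ and $\{|k\rangle\}$ of $B$. For a unit vector $|\varphi\rangle=\sum_{j,k}\varphi_{jk}|j\rangle|k\rangle$ put $q_j=\sum_k|\varphi_{jk}|^2$ and $$g_p(|\varphi\rangle)=\frac{1}{1-p}\ln\sum_j q_j^p .$$ Regarding $g_p$ as a function of the real coordinates $(\operatorname{Re}\varphi_{jk},\operatorname{Im}\varphi_{jk})\in\mathbb{R}^{2|A||B|}$, at every unit vector $|\varphi\rangle$ one has $$\nabla g_p\cdot\nabla g_p=\frac{4p^2}{(1-p)^2}\,\frac{\sum_j q_j^{2p-1}}{\left(\sum_j q_j^p\right)^2}\le \frac{4p^2}{(1-p)^2}\,|A|^{p-1}.$$ Consequently $g_p$ is Lipschitz on the unit sphere of $A\otimes B$ (with respect to the Euclidean norm) with constant at most $\frac{2p}{p-1}|A|^{(p-1)/2}$.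
   Context: $|A|$ denotes the dimension of $A$; logarithms are natural. *)

From Stdlib Require Import Reals Lra Lia Arith.
Open Scope R_scope.

Fixpoint rsum (n : nat) (f : nat -> R) : R :=
  match n with
  | O => 0
  | S m => rsum m f + f m
  end.

(* Real power x^y for x >= 0, with the convention 0^y = 0 (y > 0).
   (Stdlib's Rpower 0 y = 1, which is the wrong convention here.) *)
Definition pw (x y : R) : R :=
  if Req_EM_T x 0 then 0 else Rpower x y.

(* A vector of A (x) B, dim A = a, dim B = b, is given by its real parts
   re j k and imaginary parts im j k (j < a, k < b). *)

Definition qj (b : nat) (re im : nat -> nat -> R) (j : nat) : R :=
  rsum b (fun k => re j k ^ 2 + im j k ^ 2).

Definition gp (p : R) (a b : nat) (re im : nat -> nat -> R) : R :=
  / (1 - p) * ln (rsum a (fun j => pw (qj b re im j) p)).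

Definition sqnorm (a b : nat) (re im : nat -> nat -> R) : R :=
  rsum a (fun j => qj b re im j).

Definition is_unit (a b : nat) (re im : nat -> nat -> R) : Prop :=
  sqnorm a b re im = 1.

Definition edist (a b : nat) (re im re' im' : nat -> nat -> R) : R :=
  sqrt (sqnorm a b (fun j k => re j k - re' j k) (fun j k => im j k - im' j k)).

Definition upd (f : nat -> nat -> R) (j k : nat) (t : R) : nat -> nat -> R :=
  fun j' k' => if andb (Nat.eqb j' j) (Nat.eqb k' k) then t else f j' k'.

(* Moving one real coordinate t (= Re phi_jk or Im phi_jk) only
   changes q_j = t^2 + C with C >= 0, so dg_p/dt = 2p/(1-p) q_j^(p-1) t / S;
   at q_j = 0 this is 0 because p > 1.  Summing the squares over k gives
   |grad g_p|^2 = 4p^2/(1-p)^2 sum_j q_j^(2p-1) / S^2.  As q_j <= 1 we have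
   q_j^(2p-1) <= q_j^p, and the tangent line of x^p at 1/a gives the power
   mean bound S >= a^(1-p); hence the ratio is at most a^(p-1).

   With w_j = sqrt q_j we have S = sum_j w_j^(2p).  The
   tangent inequality for x^(2p), Cauchy-Schwarz, w_j^(2p-2) <= 1 and
   |w_j - w'_j|^2 <= sum_k |phi_jk - phi'_jk|^2 give
   S - S' <= 2p sqrt S |phi - phi'|.  If S > S', put x = sqrt S, y = sqrt S':
   ln S - ln S' = 2 ln (x/y) <= x/y - y/x = (S - S')/(xy) <= 2p |phi-phi'|/y
   and y >= a^((1-p)/2).  Symmetrising and dividing by p - 1 yields the
   constant 2p/(p-1) a^((p-1)/2). *)

From Stdlib Require Import Reals Lra Lia Arith.
Open Scope R_scope.

Lemma rsum_ext n f g : (forall i, (i < n)%nat -> f i = g i) -> rsum n f = rsum n g.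
Proof.
  induction n as [|n IH]; simpl; intros H; auto.
  rewrite IH by (intros; apply H; lia). rewrite H by lia. reflexivity.
Qed.

Lemma rsum_le n f g : (forall i, (i < n)%nat -> f i <= g i) -> rsum n f <= rsum n g.
Proof.
  induction n as [|n IH]; simpl; intros H; [lra|].
  assert (rsum n f <= rsum n g) by (apply IH; intros; apply H; lia).
  assert (f n <= g n) by (apply H; lia). lra.
Qed.

Lemma rsum_zero n : rsum n (fun _ => 0) = 0.
Proof. induction n as [|n IH]; simpl; [|rewrite IH]; lra. Qed.

Lemma rsum_nonneg n f : (forall i, (i < n)%nat -> 0 <= f i) -> 0 <= rsum n f.
Proof. intros H. rewrite <- (rsum_zero n). apply rsum_le; auto. Qed.

Lemma rsum_plus n f g : rsum n (fun i => f i + g i) = rsum n f + rsum n g.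
Proof. induction n as [|n IH]; simpl; [|rewrite IH]; lra. Qed.

Lemma rsum_scal n c f : rsum n (fun i => c * f i) = c * rsum n f.
Proof. induction n as [|n IH]; simpl; [|rewrite IH]; lra. Qed.

Lemma rsum_const n c : rsum n (fun _ => c) = INR n * c.
Proof. induction n as [|n IH]; simpl rsum; [simpl; lra|]. rewrite IH, S_INR; lra. Qed.

Lemma rsum_upd n f x k : (k < n)%nat ->
  rsum n (fun i => if Nat.eqb i k then x else f i) = rsum n f - f k + x.
Proof.
  induction n as [|n IH]; intros Hk; [lia|]. simpl.
  destruct (Nat.eqb_spec n k) as [->|Hnk].
  - rewrite (rsum_ext k _ f); [lra|].
    intros i Hi. destruct (Nat.eqb_spec i k); [lia|auto].
  - rewrite IH by lia. lra.
Qed.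

Lemma rsum_ge_term n f k : (k < n)%nat -> (forall i, (i < n)%nat -> 0 <= f i) ->
  f k <= rsum n f.
Proof.
  intros Hk H. rewrite <- (Rplus_0_r (f k)).
  assert (Hrest : 0 <= rsum n (fun i => if Nat.eqb i k then 0 else f i)).
  { apply rsum_nonneg. intros i Hi. destruct (Nat.eqb i k); [lra|auto]. }
  rewrite rsum_upd in Hrest by auto. lra.
Qed.

Lemma sum_sq_nonneg x y : 0 <= x ^ 2 + y ^ 2.
Proof. apply Rplus_le_le_0_compat; apply pow2_ge_0. Qed.

Lemma discriminant_nonpos X P Y : 0 <= X ->
  (forall t, 0 <= X * t ^ 2 + 2 * P * t + Y) -> P ^ 2 <= X * Y.
Proof.
  intros HX Hq. destruct (Req_dec X 0) as [H0|H0].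
  - destruct (Req_dec P 0) as [HP|HP]; [subst; nra|].
    specialize (Hq (- (Y + 1) / (2 * P))). rewrite H0 in Hq.
    replace (0 * (- (Y + 1) / (2 * P)) ^ 2 + 2 * P * (- (Y + 1) / (2 * P)) + Y)
      with (-1) in Hq by (field; auto). lra.
  - specialize (Hq (- P / X)).
    replace (X * (- P / X) ^ 2 + 2 * P * (- P / X) + Y) with ((X * Y - P ^ 2) / X)
      in Hq by (field; auto).
    assert (0 <= X * Y - P ^ 2); [|lra].
    replace (X * Y - P ^ 2) with ((X * Y - P ^ 2) / X * X) by (field; auto).
    apply Rmult_le_pos; lra.
Qed.

Lemma cauchy_schwarz n f1 f2 g1 g2 :
  rsum n (fun i => f1 i * g1 i + f2 i * g2 i) <=
  sqrt (rsum n (fun i => f1 i ^ 2 + f2 i ^ 2)) * sqrt (rsum n (fun i => g1 i ^ 2 + g2 i ^ 2)).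
Proof.
  set (X := rsum n (fun i => f1 i ^ 2 + f2 i ^ 2)).
  set (Y := rsum n (fun i => g1 i ^ 2 + g2 i ^ 2)).
  set (P := rsum n (fun i => f1 i * g1 i + f2 i * g2 i)).
  assert (HX : 0 <= X) by (apply rsum_nonneg; intros; apply sum_sq_nonneg).
  assert (HY : 0 <= Y) by (apply rsum_nonneg; intros; apply sum_sq_nonneg).
  assert (HPXY : P ^ 2 <= X * Y).
  { apply discriminant_nonpos; auto. intros t.
    replace (X * t ^ 2 + 2 * P * t + Y)
      with (rsum n (fun i => (t * f1 i + g1 i) ^ 2 + (t * f2 i + g2 i) ^ 2)).
    - apply rsum_nonneg; intros; apply sum_sq_nonneg.
    - unfold X, Y, P.
      rewrite (rsum_ext n (fun i => (t * f1 i + g1 i) ^ 2 + (t * f2 i + g2 i) ^ 2)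
                 (fun i => t ^ 2 * (f1 i ^ 2 + f2 i ^ 2)
                 + ((2 * t) * (f1 i * g1 i + f2 i * g2 i) + (g1 i ^ 2 + g2 i ^ 2))))
        by (intros; ring).
      rewrite !rsum_plus, !rsum_scal, !rsum_plus. ring. }
  rewrite <- sqrt_mult by auto.
  apply Rle_trans with (Rabs P); [apply Rle_abs|].
  rewrite <- sqrt_Rsqr_abs. apply sqrt_le_1_alt. rewrite Rsqr_pow2. exact HPXY.
Qed.

Lemma cauchy_schwarz_real n f g :
  rsum n (fun i => f i * g i) <= sqrt (rsum n (fun i => f i ^ 2)) * sqrt (rsum n (fun i => g i ^ 2)).
Proof.
  assert (H := cauchy_schwarz n f (fun _ => 0) g (fun _ => 0)). cbv beta in H.
  rewrite (rsum_ext n (fun i => f i * g i + 0 * 0) (fun i => f i * g i)) in H by (intros; ring).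
  rewrite (rsum_ext n (fun i => f i ^ 2 + 0 ^ 2) (fun i => f i ^ 2)) in H by (intros; ring).
  rewrite (rsum_ext n (fun i => g i ^ 2 + 0 ^ 2) (fun i => g i ^ 2)) in H by (intros; ring).
  exact H.
Qed.

Lemma ln_le_mono x y : 0 < x -> x <= y -> ln x <= ln y.
Proof. intros Hx [H|<-]; [left; apply ln_increasing; auto|lra]. Qed.

Lemma exp_le_mono x y : x <= y -> exp x <= exp y.
Proof. intros [H|<-]; [left; apply exp_increasing; auto|lra]. Qed.

Lemma pw_0 y : pw 0 y = 0.
Proof. unfold pw. destruct (Req_EM_T 0 0); lra. Qed.

Lemma pw_pos x y : 0 < x -> pw x y = Rpower x y.
Proof. intros. unfold pw. destruct (Req_EM_T x 0); [lra|auto]. Qed.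

Lemma Rpower_pos x y : 0 < Rpower x y.
Proof. apply exp_pos. Qed.

Lemma pw_nonneg x y : 0 <= pw x y.
Proof. unfold pw. destruct (Req_EM_T x 0); [lra|]. left; apply Rpower_pos. Qed.

Lemma pw_mult x y z : 0 <= x -> pw x y * pw x z = pw x (y + z).
Proof.
  intros [H|<-]; [rewrite !pw_pos, Rpower_plus by auto; reflexivity|].
  rewrite !pw_0; ring.
Qed.

Lemma pw_1 x : 0 <= x -> pw x 1 = x.
Proof. intros [H|<-]; [rewrite pw_pos, Rpower_1|apply pw_0]; auto. Qed.

Lemma pw_pred x e : 0 <= x -> pw x e = x * pw x (e - 1).
Proof.
  intros Hx. rewrite <- (pw_1 x) at 2 by auto. rewrite pw_mult by auto. f_equal; ring.
Qed.

Lemma pw_le1 x y : 0 <= x <= 1 -> 0 <= y -> pw x y <= 1.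
Proof.
  intros [[Hx|<-] Hx1] Hy; [|rewrite pw_0; lra].
  rewrite pw_pos by auto. unfold Rpower. rewrite <- exp_0.
  assert (ln x <= 0) by (rewrite <- ln_1; apply ln_le_mono; lra).
  apply exp_le_mono. nra.
Qed.

Lemma pw_sqrt q e : 0 <= q -> pw q e = pw (sqrt q) (2 * e).
Proof.
  intros [H|<-]; [|rewrite sqrt_0, !pw_0; auto].
  assert (Hs : 0 < sqrt q) by (apply sqrt_lt_R0; auto).
  rewrite !pw_pos by auto. unfold Rpower. f_equal.
  rewrite <- (sqrt_sqrt q) at 1 by lra. rewrite ln_mult by auto. ring.
Qed.

Lemma pw_tangent e x r : 1 <= e -> 0 <= x -> 0 <= r ->
  pw r e + e * pw r (e - 1) * (x - r) <= pw x e.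
Proof.
  intros He Hx [Hr|<-]; [|rewrite !pw_0, Rmult_0_r, Rmult_0_l, Rplus_0_l; apply pw_nonneg].
  assert (Hrr : pw r e = pw r (e - 1) * r) by (rewrite pw_pred; lra).
  destruct Hx as [Hx|<-]; [|rewrite pw_0; assert (0 <= pw r e) by apply pw_nonneg; nra].
  rewrite !pw_pos in * by auto.
  assert (Hmono : forall u v, 0 < u -> u <= v -> Rpower u (e - 1) <= Rpower v (e - 1))
    by (intros; apply Rle_Rpower_l; lra).
  assert (MVT : forall u v, u < v -> 0 < u ->
            exists c, u < c < v /\ Rpower v e - Rpower u e = e * Rpower c (e - 1) * (v - u)).
  { intros u v Huv Hu.
    destruct (MVT_cor2 (fun s => Rpower s e) (fun c => e * Rpower c (e - 1)) u v Huv)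
      as [c [Hc Hc2]]; [|exists c; split; [lra|auto]].
    intros c Hc; apply derivable_pt_lim_power; lra. }
  destruct (Rtotal_order r x) as [Hlt|[<-|Hgt]].
  - destruct (MVT r x Hlt Hr) as [c [Hc Hc2]].
    assert (Rpower r (e - 1) <= Rpower c (e - 1)) by (apply Hmono; lra).
    assert (0 <= e * ((Rpower c (e - 1) - Rpower r (e - 1)) * (x - r)))
      by (apply Rmult_le_pos; [lra|apply Rmult_le_pos; lra]).
    nra.
  - lra.
  - destruct (MVT x r Hgt Hx) as [c [Hc Hc2]].
    assert (Rpower c (e - 1) <= Rpower r (e - 1)) by (apply Hmono; lra).
    assert (0 <= e * ((Rpower r (e - 1) - Rpower c (e - 1)) * (r - x)))
      by (apply Rmult_le_pos; [lra|apply Rmult_le_pos; lra]).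
    nra.
Qed.

(* y <= sinh y for y >= 0, since (sinh - id)' = cosh - 1 >= 0. *)
Lemma le_sinh y : 0 <= y -> y <= sinh y.
Proof.
  intros [Hy|<-]; [|unfold sinh; rewrite Ropp_0; lra].
  destruct (MVT_cor2 (fun s => sinh s - s) (fun c => cosh c - 1) 0 y Hy) as [c [Hc _]].
  { intros c _. apply (derivable_pt_lim_minus sinh id);
      [apply derivable_pt_lim_sinh|apply derivable_pt_lim_id]. }
  assert (1 <= cosh c).
  { unfold cosh.
    assert (exp c * exp (- c) = 1)
      by (rewrite <- exp_plus; replace (c + - c) with 0 by ring; apply exp_0).
    assert (0 < exp c) by apply exp_pos. assert (0 < exp (- c)) by apply exp_pos.
    assert (0 <= (exp c - exp (- c)) ^ 2) by apply pow2_ge_0. nra. }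
  assert (sinh 0 = 0) by (unfold sinh; rewrite Ropp_0; lra). nra.
Qed.

(* 2 ln t <= t - 1/t for t >= 1 (substitute t = e^y in y <= sinh y). *)
Lemma two_ln_le t : 1 <= t -> 2 * ln t <= t - / t.
Proof.
  intros Ht.
  assert (Hy : 0 <= ln t) by (rewrite <- ln_1; apply ln_le_mono; lra).
  assert (H := le_sinh (ln t) Hy). unfold sinh in H.
  rewrite exp_Ropp, exp_ln in H by lra. lra.
Qed.

Lemma derivable_pw_sq_pos p C t0 l u : l < t0 < u -> (forall z, l < z < u -> 0 < z ^ 2 + C) ->
  derivable_pt_lim (fun t => pw (t ^ 2 + C) p) t0 (p * pw (t0 ^ 2 + C) (p - 1) * (2 * t0)).
Proof.
  intros Ht0 Hz.
  apply (derivable_pt_lim_locally_ext (fun t => Rpower (t ^ 2 + C) p) _ t0 l u); auto.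
  { intros z Hz'. rewrite pw_pos; auto. }
  rewrite pw_pos by auto.
  assert (Hsq : derivable_pt_lim (fun t => t ^ 2 + C) t0 (2 * t0)).
  { replace (2 * t0) with (INR 2 * t0 ^ pred 2 + 0) by (simpl; ring).
    apply (derivable_pt_lim_plus (fun t => t ^ 2) (fct_cte C));
      [apply derivable_pt_lim_pow|apply derivable_pt_lim_const]. }
  apply (derivable_pt_lim_comp (fun t => t ^ 2 + C) (fun s => Rpower s p)); auto.
  apply derivable_pt_lim_power; auto.
Qed.

(* At the degenerate point, d/dt (t^2)^p = 0 at t = 0 since |t|^(2p) = o(t). *)
Lemma derivable_pw_sq_0 p : 1 < p -> derivable_pt_lim (fun t => pw (t ^ 2) p) 0 0.
Proof.
  intros Hp eps Heps.
  assert (Hd : 0 < Rmin 1 eps) by (apply Rmin_pos; lra).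
  exists (mkposreal _ Hd). intros h Hh Hhd. simpl in Hhd.
  assert (h1 : Rabs h < 1) by (eapply Rlt_le_trans; [exact Hhd|apply Rmin_l]).
  assert (h2 : Rabs h < eps) by (eapply Rlt_le_trans; [exact Hhd|apply Rmin_r]).
  replace ((0 + h) ^ 2) with (h ^ 2) by ring. replace (0 ^ 2) with 0 by ring.
  rewrite pw_0, !Rminus_0_r.
  assert (Hh2 : 0 <= h ^ 2 <= 1).
  { rewrite <- (pow2_abs h). assert (0 <= Rabs h) by apply Rabs_pos. nra. }
  assert (B : pw (h ^ 2) (p - 1) <= 1) by (apply pw_le1; lra).
  assert (B0 : 0 <= pw (h ^ 2) (p - 1)) by apply pw_nonneg.
  rewrite pw_pred by lra.
  replace (h ^ 2 * pw (h ^ 2) (p - 1) / h) with (h * pw (h ^ 2) (p - 1)) by (field; auto).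
  rewrite Rabs_mult, (Rabs_right (pw _ _)) by lra.
  assert (0 <= Rabs h) by apply Rabs_pos. nra.
Qed.

Lemma derivable_pw_sq p C t0 : 1 < p -> 0 <= C ->
  derivable_pt_lim (fun t => pw (t ^ 2 + C) p) t0 (p * pw (t0 ^ 2 + C) (p - 1) * (2 * t0)).
Proof.
  intros Hp HC.
  destruct (Req_dec C 0) as [->|HC0]; [destruct (Req_dec t0 0) as [->|Ht0]|].
  - replace (p * pw (0 ^ 2 + 0) (p - 1) * (2 * 0)) with 0 by ring.
    apply (derivable_pt_lim_ext (fun t => pw (t ^ 2) p)).
    { intros z. rewrite Rplus_0_r. reflexivity. }
    apply derivable_pw_sq_0; auto.
  - assert (0 < Rabs t0) by (apply Rabs_pos_lt; auto).
    apply (derivable_pw_sq_pos p 0 t0 (t0 - Rabs t0) (t0 + Rabs t0)); [lra|].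
    intros z Hz. assert (z <> 0).
    { intros ->. destruct (Rcase_abs t0);
        [rewrite Rabs_left in Hz|rewrite Rabs_right in Hz]; lra. }
    assert (0 < z ^ 2) by (rewrite <- Rsqr_pow2; apply Rsqr_pos_lt; auto). lra.
  - apply (derivable_pw_sq_pos p C t0 (t0 - 1) (t0 + 1)); [lra|].
    intros z _. assert (0 <= z ^ 2) by apply pow2_ge_0. lra.
Qed.

Lemma derivable_log_section p K C t0 : 1 < p -> 0 <= C -> 0 < K + pw (t0 ^ 2 + C) p ->
  derivable_pt_lim (fun t => / (1 - p) * ln (K + pw (t ^ 2 + C) p)) t0
    (2 * p / (1 - p) * pw (t0 ^ 2 + C) (p - 1) * t0 / (K + pw (t0 ^ 2 + C) p)).
Proof.
  intros Hp HC HS.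
  assert (H1 : derivable_pt_lim (fun t => K + pw (t ^ 2 + C) p) t0
                 (0 + p * pw (t0 ^ 2 + C) (p - 1) * (2 * t0))).
  { apply (derivable_pt_lim_plus (fct_cte K) (fun t => pw (t ^ 2 + C) p));
      [apply derivable_pt_lim_const|apply derivable_pw_sq; auto]. }
  assert (H2 := derivable_pt_lim_scal _ (/ (1 - p)) t0 _
                  (derivable_pt_lim_comp _ ln t0 _ _ H1 (derivable_pt_lim_ln _ HS))).
  replace (2 * p / (1 - p) * pw (t0 ^ 2 + C) (p - 1) * t0 / (K + pw (t0 ^ 2 + C) p))
    with (/ (1 - p) * (/ (K + pw (t0 ^ 2 + C) p) * (0 + p * pw (t0 ^ 2 + C) (p - 1) * (2 * t0))))
    by (field; lra).
  exact H2.
Qed.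

Lemma qj_swap b re im j : qj b re im j = qj b im re j.
Proof. unfold qj. apply rsum_ext; intros; ring. Qed.

Lemma qj_nonneg b re im j : 0 <= qj b re im j.
Proof. unfold qj. apply rsum_nonneg; intros; apply sum_sq_nonneg. Qed.

Lemma qj_upd_same b re im j k t : (k < b)%nat ->
  qj b (upd re j k t) im j = t ^ 2 + (qj b re im j - re j k ^ 2).
Proof.
  intros Hk. unfold qj.
  rewrite (rsum_ext b _ (fun k' => if Nat.eqb k' k then t ^ 2 + im j k ^ 2
                                   else re j k' ^ 2 + im j k' ^ 2)).
  - rewrite rsum_upd by auto. ring.
  - intros i Hi. unfold upd. rewrite Nat.eqb_refl. simpl.
    destruct (Nat.eqb_spec i k); subst; auto.
Qed.

Lemma qj_upd_other b re im j j' k t : j' <> j -> qj b (upd re j k t) im j' = qj b re im j'.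
Proof.
  intros H. unfold qj. apply rsum_ext. intros i Hi. unfold upd.
  destruct (Nat.eqb_spec j' j); [lia|reflexivity].
Qed.

Lemma qj_ge_coord b re im j k : (k < b)%nat -> re j k ^ 2 <= qj b re im j.
Proof.
  intros Hk.
  assert (re j k ^ 2 + im j k ^ 2 <= qj b re im j)
    by (apply (rsum_ge_term b (fun k => re j k ^ 2 + im j k ^ 2)); auto;
        intros; apply sum_sq_nonneg).
  assert (0 <= im j k ^ 2) by apply pow2_ge_0. lra.
Qed.

Lemma unit_a_pos a b re im : is_unit a b re im -> (0 < a)%nat.
Proof. unfold is_unit, sqnorm. destruct a; simpl; intros; lra || lia. Qed.

Lemma qj_le1 a b re im j : is_unit a b re im -> (j < a)%nat -> qj b re im j <= 1.
Proof.
  intros H Hj. unfold is_unit, sqnorm in H. rewrite <- H.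
  apply rsum_ge_term; auto. intros; apply qj_nonneg.
Qed.

Lemma row_norm_diff b re im re' im' j :
  (sqrt (qj b re im j) - sqrt (qj b re' im' j)) ^ 2 <=
  qj b (fun j k => re j k - re' j k) (fun j k => im j k - im' j k) j.
Proof.
  set (P := rsum b (fun i => re j i * re' j i + im j i * im' j i)).
  assert (HP : P <= sqrt (qj b re im j) * sqrt (qj b re' im' j)) by apply cauchy_schwarz.
  assert (E : qj b (fun j k => re j k - re' j k) (fun j k => im j k - im' j k) j
              = qj b re im j + qj b re' im' j - 2 * P).
  { unfold qj, P. cbv beta.
    rewrite (rsum_ext b (fun i => (re j i - re' j i) ^ 2 + (im j i - im' j i) ^ 2)
               (fun i => (re j i ^ 2 + im j i ^ 2) + ((re' j i ^ 2 + im' j i ^ 2)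
               + (-2) * (re j i * re' j i + im j i * im' j i)))) by (intros; ring).
    rewrite !rsum_plus, rsum_scal, !rsum_plus. ring. }
  rewrite E.
  rewrite <- (pow2_sqrt (qj b re im j)) at 2 by apply qj_nonneg.
  rewrite <- (pow2_sqrt (qj b re' im' j)) at 2 by apply qj_nonneg.
  nra.
Qed.

Definition power_sum (p : R) (a b : nat) (re im : nat -> nat -> R) : R :=
  rsum a (fun j => pw (qj b re im j) p).

Lemma power_sum_swap p a b re im : power_sum p a b re im = power_sum p a b im re.
Proof. unfold power_sum. apply rsum_ext. intros. rewrite qj_swap; auto. Qed.

(* Power mean inequality on the unit sphere: S >= a^(1-p), via the tangent
   line of x^p at x = 1/a summed over j. *)
Lemma power_sum_lower p a b re im : 1 < p -> is_unit a b re im ->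
  Rpower (INR a) (1 - p) <= power_sum p a b re im.
Proof.
  intros Hp Hu. assert (Ha : 0 < INR a) by (apply lt_0_INR, (unit_a_pos _ _ _ _ Hu)).
  set (r := / INR a). assert (Hr : 0 < r) by (apply Rinv_0_lt_compat; auto).
  assert (H : rsum a (fun j => pw r p + (p * pw r (p - 1)) * (qj b re im j + - r))
              <= power_sum p a b re im).
  { apply rsum_le. intros. replace (qj b re im i + - r) with (qj b re im i - r) by ring.
    apply pw_tangent; [lra|apply qj_nonneg|lra]. }
  rewrite rsum_plus, rsum_const, rsum_scal, rsum_plus, rsum_const in H.
  unfold is_unit, sqnorm in Hu. change (rsum a (qj b re im) = 1) in Hu. rewrite Hu in H.
  replace (1 + INR a * - r) with 0 in H by (unfold r; field; lra).
  rewrite pw_pos in H by auto.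
  replace (Rpower (INR a) (1 - p)) with (INR a * Rpower r p); [lra|].
  unfold r, Rpower. rewrite ln_Rinv by auto.
  rewrite <- (exp_ln (INR a)) at 1 by auto. rewrite <- exp_plus. f_equal. ring.
Qed.

Lemma power_sum_pos p a b re im : 1 < p -> is_unit a b re im -> 0 < power_sum p a b re im.
Proof. intros. eapply Rlt_le_trans; [apply Rpower_pos|apply power_sum_lower; auto]. Qed.

(* Partial derivative of g_p in a coordinate of row j whose current value is x. *)
Definition grad_coord (p : R) (a b : nat) (re im : nat -> nat -> R) (j : nat) (x : R) : R :=
  2 * p / (1 - p) * pw (qj b re im j) (p - 1) * x / power_sum p a b re im.

Lemma grad_coord_swap p a b re im j x : grad_coord p a b re im j x = grad_coord p a b im re j x.
Proof. unfold grad_coord. rewrite qj_swap, power_sum_swap. reflexivity. Qed.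

(* The partial derivatives of g_p along Re phi_jk and Im phi_jk; the
   imaginary case reduces to the real one by the (re, im) symmetry. *)
Lemma deriv_re p a b re im j k : 1 < p -> (j < a)%nat -> (k < b)%nat ->
  0 < power_sum p a b re im ->
  derivable_pt_lim (fun t => gp p a b (upd re j k t) im) (re j k) (grad_coord p a b re im j (re j k)).
Proof.
  intros Hp Hj Hk HS.
  set (C := qj b re im j - re j k ^ 2).
  set (K := power_sum p a b re im - pw (qj b re im j) p).
  assert (HC : 0 <= C) by (unfold C; assert (H := qj_ge_coord b re im j k Hk); lra).
  assert (Eq : qj b re im j = re j k ^ 2 + C) by (unfold C; ring).
  assert (ES : power_sum p a b re im = K + pw (re j k ^ 2 + C) p) by (unfold K; rewrite <- Eq; ring).
  apply (derivable_pt_lim_ext (fun t => / (1 - p) * ln (K + pw (t ^ 2 + C) p))).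
  { intros t. unfold gp. f_equal. f_equal.
    rewrite (rsum_ext a _ (fun j' => if Nat.eqb j' j then pw (t ^ 2 + C) p
                                     else pw (qj b re im j') p)).
    - rewrite rsum_upd by auto. unfold K, power_sum. ring.
    - intros i Hi. destruct (Nat.eqb_spec i j) as [->|Hij].
      + rewrite qj_upd_same by auto. reflexivity.
      + rewrite qj_upd_other by auto. reflexivity. }
  unfold grad_coord. rewrite ES, Eq.
  apply derivable_log_section; auto. rewrite <- ES; auto.
Qed.

Lemma deriv_im p a b re im j k : 1 < p -> (j < a)%nat -> (k < b)%nat ->
  0 < power_sum p a b re im ->
  derivable_pt_lim (fun t => gp p a b re (upd im j k t)) (im j k) (grad_coord p a b re im j (im j k)).
Proof.
  intros Hp Hj Hk HS. rewrite grad_coord_swap.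
  apply (derivable_pt_lim_ext (fun t => gp p a b (upd im j k t) re)).
  { intros t. unfold gp. f_equal. f_equal. apply rsum_ext. intros. rewrite qj_swap; auto. }
  apply deriv_re; auto. rewrite <- power_sum_swap; auto.
Qed.

(* |grad g_p|^2 = 4p^2/(1-p)^2 sum_j q_j^(2p-1) / S^2, using
   (q_j^(p-1))^2 q_j = q_j^(2p-1). *)
Lemma grad_norm_sq p a b re im : p <> 1 -> 0 < power_sum p a b re im ->
  rsum a (fun j => rsum b (fun k => grad_coord p a b re im j (re j k) ^ 2
                                  + grad_coord p a b re im j (im j k) ^ 2))
  = 4 * p ^ 2 / (1 - p) ^ 2 *
    (rsum a (fun j => pw (qj b re im j) (2 * p - 1)) / power_sum p a b re im ^ 2).
Proof.
  intros Hp HS. set (S := power_sum p a b re im).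
  assert (H1p : 1 - p <> 0) by (intro; apply Hp; lra).
  assert (HS0 : S <> 0) by (unfold S; lra).
  rewrite (rsum_ext a _ (fun j => (4 * p ^ 2 / (1 - p) ^ 2 / S ^ 2) * pw (qj b re im j) (2 * p - 1))).
  { rewrite rsum_scal. field; auto. }
  intros j Hj. unfold grad_coord. fold S.
  rewrite (rsum_ext b _ (fun k => (2 * p / (1 - p) * pw (qj b re im j) (p - 1) / S) ^ 2
                                  * (re j k ^ 2 + im j k ^ 2)))
    by (intros; field; auto).
  rewrite rsum_scal. fold (qj b re im j).
  replace (2 * p - 1) with ((p - 1) + ((p - 1) + 1)) by ring.
  rewrite <- !pw_mult, pw_1 by apply qj_nonneg. field; auto.
Qed.

(* On the unit sphere, sum_j q_j^(2p-1) / S^2 <= a^(p-1):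
   q_j^(2p-1) <= q_j^p since q_j <= 1, and then 1/S <= a^(p-1). *)
Lemma grad_ratio_bound p a b re im : 1 < p -> is_unit a b re im ->
  rsum a (fun j => pw (qj b re im j) (2 * p - 1)) / power_sum p a b re im ^ 2
  <= Rpower (INR a) (p - 1).
Proof.
  intros Hp Hu. set (S := power_sum p a b re im).
  assert (HSm : Rpower (INR a) (1 - p) <= S) by (apply power_sum_lower; auto).
  assert (HS : 0 < S) by (apply power_sum_pos; auto).
  assert (T : rsum a (fun j => pw (qj b re im j) (2 * p - 1)) <= S).
  { apply rsum_le. intros j Hj. replace (2 * p - 1) with (p + (p - 1)) by ring.
    rewrite <- pw_mult by apply qj_nonneg.
    assert (pw (qj b re im j) (p - 1) <= 1)
      by (apply pw_le1; [split; [apply qj_nonneg|apply (qj_le1 a); auto]|lra]).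
    assert (0 <= pw (qj b re im j) p) by apply pw_nonneg. nra. }
  replace (Rpower (INR a) (p - 1)) with (/ Rpower (INR a) (1 - p))
    by (rewrite <- Rpower_Ropp; f_equal; ring).
  apply Rle_trans with (/ S).
  - unfold Rdiv. replace (/ S) with (S * / S ^ 2) by (field; lra).
    apply Rmult_le_compat_r; [apply Rlt_le, Rinv_0_lt_compat; nra|exact T].
  - apply Rinv_le_contravar; [apply Rpower_pos|exact HSm].
Qed.

Lemma row_norms_dist a b re im re' im' :
  sqrt (rsum a (fun j => (sqrt (qj b re im j) - sqrt (qj b re' im' j)) ^ 2))
  <= edist a b re im re' im'.
Proof.
  apply sqrt_le_1_alt. apply rsum_le. intros j Hj. apply row_norm_diff.
Qed.

(* With w_j = |phi_j|:  sum_j (w_j^(2p-1))^2 <= sum_j w_j^(2p) = S on the unit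
   sphere, because w_j^(2p-2) <= 1. *)
Lemma power_sum_dual_le p a b re im : 1 < p -> is_unit a b re im ->
  rsum a (fun j => pw (sqrt (qj b re im j)) (2 * p - 1) ^ 2) <= power_sum p a b re im.
Proof.
  intros Hp Hu. unfold power_sum. apply rsum_le. intros j Hj.
  rewrite (pw_sqrt (qj b re im j)) by apply qj_nonneg.
  set (w := sqrt (qj b re im j)). simpl.
  rewrite Rmult_1_r, pw_mult by apply sqrt_pos.
  replace (2 * p - 1 + (2 * p - 1)) with (2 * p + (2 * p - 2)) by ring.
  rewrite <- pw_mult by apply sqrt_pos.
  assert (pw w (2 * p - 2) <= 1).
  { apply pw_le1; [|lra]. split; [apply sqrt_pos|].
    unfold w. rewrite <- sqrt_1. apply sqrt_le_1_alt, (qj_le1 a); auto. }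
  assert (0 <= pw w (2 * p)) by apply pw_nonneg. nra.
Qed.

(* S - S' <= 2p sqrt S |phi - phi'| for a unit vector phi: tangent
   inequality for x^(2p) at w_j = |phi_j|, then Cauchy-Schwarz. *)
Lemma power_sum_drop p a b re im re' im' : 1 < p -> is_unit a b re im ->
  power_sum p a b re im - power_sum p a b re' im'
  <= 2 * p * sqrt (power_sum p a b re im) * edist a b re im re' im'.
Proof.
  intros Hp Hu.
  set (w := fun j => sqrt (qj b re im j)). set (w' := fun j => sqrt (qj b re' im' j)).
  set (al := fun j => pw (w j) (2 * p - 1)).
  assert (Htan : power_sum p a b re im - power_sum p a b re' im'
                 <= 2 * p * rsum a (fun j => al j * (w j - w' j))).
  { assert (H : rsum a (fun j => pw (w j) (2 * p) + (- (2 * p)) * (al j * (w j - w' j)))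
                <= power_sum p a b re' im').
    { unfold power_sum. apply rsum_le. intros j Hj.
      rewrite (pw_sqrt (qj b re' im' j)) by apply qj_nonneg. fold (w' j).
      replace (pw (w j) (2 * p) + - (2 * p) * (al j * (w j - w' j)))
        with (pw (w j) (2 * p) + 2 * p * pw (w j) (2 * p - 1) * (w' j - w j)) by (unfold al; ring).
      apply pw_tangent; [lra|apply sqrt_pos|apply sqrt_pos]. }
    rewrite rsum_plus, rsum_scal in H.
    replace (power_sum p a b re im) with (rsum a (fun j => pw (w j) (2 * p))); [lra|].
    apply rsum_ext. intros j _. unfold w. rewrite (pw_sqrt (qj b re im j)) by apply qj_nonneg.
    reflexivity. }
  assert (Hcs : rsum a (fun j => al j * (w j - w' j))
                <= sqrt (power_sum p a b re im) * edist a b re im re' im').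
  { eapply Rle_trans; [apply cauchy_schwarz_real|].
    apply Rmult_le_compat; try apply sqrt_pos.
    - apply sqrt_le_1_alt, power_sum_dual_le; auto.
    - apply row_norms_dist. }
  nra.
Qed.

Lemma sqrt_power_sum_lower p a b re im : 1 < p -> is_unit a b re im ->
  1 <= Rpower (INR a) ((p - 1) / 2) * sqrt (power_sum p a b re im).
Proof.
  intros Hp Hu.
  set (c := Rpower (INR a) ((p - 1) / 2)). set (y := sqrt (power_sum p a b re im)).
  assert (HS := power_sum_lower p a b re im Hp Hu).
  assert (Hc : 0 < c) by apply Rpower_pos.
  assert (Hy0 : 0 < y) by (apply sqrt_lt_R0, power_sum_pos; auto).
  assert (Hy2 : y ^ 2 = power_sum p a b re im) by (apply pow2_sqrt; left; apply power_sum_pos; auto).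
  assert (Hcc : c ^ 2 * Rpower (INR a) (1 - p) = 1).
  { unfold c. simpl. rewrite Rmult_1_r, <- !Rpower_plus.
    replace ((p - 1) / 2 + (p - 1) / 2 + (1 - p)) with 0 by field. apply Rpower_O.
    apply lt_0_INR, (unit_a_pos _ _ _ _ Hu). }
  assert (1 <= (c * y) ^ 2)
    by (rewrite <- Hcc, Rpow_mult_distr, Hy2; apply Rmult_le_compat_l; nra).
  assert (0 < c * y) by nra. nra.
Qed.

(* ln S - ln S' <= 2p a^((p-1)/2) |phi - phi'| for unit vectors: if S > S',
   ln S - ln S' = 2 ln (x/y) <= x/y - y/x = (S - S')/(xy) with x, y = sqrt S, sqrt S'. *)
Lemma ln_power_sum_drop p a b re im re' im' : 1 < p -> is_unit a b re im -> is_unit a b re' im' ->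
  ln (power_sum p a b re im) - ln (power_sum p a b re' im')
  <= 2 * p * Rpower (INR a) ((p - 1) / 2) * edist a b re im re' im'.
Proof.
  intros Hp Hu Hu'.
  set (S := power_sum p a b re im). set (S' := power_sum p a b re' im').
  set (E := edist a b re im re' im').
  set (c := Rpower (INR a) ((p - 1) / 2)).
  assert (HE : 0 <= E) by apply sqrt_pos.
  assert (Hc : 0 < c) by apply Rpower_pos.
  assert (HS'0 : 0 < S') by (apply power_sum_pos; auto).
  destruct (Rle_lt_dec S S') as [Hle|Hlt].
  { assert (ln S <= ln S') by (apply ln_le_mono; [apply power_sum_pos|]; auto).
    assert (0 <= 2 * p * c * E) by (apply Rmult_le_pos; [apply Rmult_le_pos|]; lra). lra. }
  set (x := sqrt S). set (y := sqrt S').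
  assert (Hx2 : x ^ 2 = S) by (apply pow2_sqrt; lra).
  assert (Hy2 : y ^ 2 = S') by (apply pow2_sqrt; lra).
  assert (Hxy : y < x) by (apply sqrt_lt_1_alt; lra).
  assert (Hy0 : 0 < y) by (apply sqrt_lt_R0; lra).
  assert (Hyc : 1 <= c * y) by (apply sqrt_power_sum_lower; auto).
  assert (HK : S - S' <= 2 * p * x * E) by (apply power_sum_drop; auto).
  assert (Ht : 1 <= x / y).
  { replace 1 with (y * / y) by (field; lra). unfold Rdiv.
    apply Rmult_le_compat_r; [left; apply Rinv_0_lt_compat|]; lra. }
  assert (L := two_ln_le (x / y) Ht).
  assert (Eln : ln S - ln S' = 2 * ln (x / y)).
  { rewrite <- Hx2, <- Hy2, <- !Rsqr_pow2. unfold Rsqr.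
    rewrite !ln_mult by lra. unfold Rdiv.
    rewrite ln_mult, ln_Rinv by (try apply Rinv_0_lt_compat; lra). ring. }
  assert (Q : x / y - / (x / y) = (S - S') / (x * y)) by (rewrite <- Hx2, <- Hy2; field; lra).
  assert (B : (S - S') / (x * y) <= 2 * p * c * E).
  { apply Rmult_le_reg_r with (x * y); [nra|].
    replace ((S - S') / (x * y) * (x * y)) with (S - S') by (field; lra).
    assert (0 <= 2 * p * x * E) by (apply Rmult_le_pos; [apply Rmult_le_pos|]; lra).
    nra. }
  lra.
Qed.

Lemma edist_sym a b re im re' im' : edist a b re im re' im' = edist a b re' im' re im.
Proof. unfold edist, sqnorm. f_equal. apply rsum_ext; intros. unfold qj. apply rsum_ext; intros. ring. Qed.

Lemma gp_lipschitz p a b re im re' im' : 1 < p -> is_unit a b re im -> is_unit a b re' im' ->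
  Rabs (gp p a b re im - gp p a b re' im')
  <= 2 * p / (p - 1) * Rpower (INR a) ((p - 1) / 2) * edist a b re im re' im'.
Proof.
  intros Hp Hu Hu'.
  assert (H1 := ln_power_sum_drop p a b re im re' im' Hp Hu Hu').
  assert (H2 := ln_power_sum_drop p a b re' im' re im Hp Hu' Hu).
  rewrite <- edist_sym in H2.
  set (L := 2 * p * Rpower (INR a) ((p - 1) / 2) * edist a b re im re' im') in *.
  unfold gp. fold (power_sum p a b re im) (power_sum p a b re' im').
  replace (/ (1 - p) * ln (power_sum p a b re im) - / (1 - p) * ln (power_sum p a b re' im'))
    with ((ln (power_sum p a b re' im') - ln (power_sum p a b re im)) / (p - 1)) by (field; lra).
  replace (2 * p / (p - 1) * Rpower (INR a) ((p - 1) / 2) * edist a b re im re' im')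
    with (L / (p - 1)) by (unfold L; field; lra).
  assert (Hinv : 0 < / (p - 1)) by (apply Rinv_0_lt_compat; lra).
  unfold Rdiv. rewrite Rabs_mult, (Rabs_right (/ (p - 1))) by lra.
  apply Rmult_le_compat_r; [lra|]. apply Rabs_le. lra.
Qed.

Theorem mainTheorem2 (p : R) (a b : nat) (hp1 : 1 < p) (hp2 : p < 2) :
  (forall re im : nat -> nat -> R,
    is_unit a b re im ->
    exists dre dim : nat -> nat -> R,
      (forall j k, (j < a)%nat -> (k < b)%nat ->
         derivable_pt_lim (fun t => gp p a b (upd re j k t) im) (re j k) (dre j k)) /\
      (forall j k, (j < a)%nat -> (k < b)%nat ->
         derivable_pt_lim (fun t => gp p a b re (upd im j k t)) (im j k) (dim j k)) /\
      rsum a (fun j => rsum b (fun k => dre j k ^ 2 + dim j k ^ 2))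
        = 4 * p ^ 2 / (1 - p) ^ 2 *
          (rsum a (fun j => pw (qj b re im j) (2 * p - 1))
           / (rsum a (fun j => pw (qj b re im j) p)) ^ 2) /\
      4 * p ^ 2 / (1 - p) ^ 2 *
          (rsum a (fun j => pw (qj b re im j) (2 * p - 1))
           / (rsum a (fun j => pw (qj b re im j) p)) ^ 2)
        <= 4 * p ^ 2 / (1 - p) ^ 2 * Rpower (INR a) (p - 1)) /\
  (forall re im re' im' : nat -> nat -> R,
    is_unit a b re im -> is_unit a b re' im' ->
    Rabs (gp p a b re im - gp p a b re' im')
      <= 2 * p / (p - 1) * Rpower (INR a) ((p - 1) / 2) * edist a b re im re' im').
Proof.
  split.
  - intros re im Hu.
    assert (HS := power_sum_pos p a b re im hp1 Hu).
    exists (fun j k => grad_coord p a b re im j (re j k)).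
    exists (fun j k => grad_coord p a b re im j (im j k)).
    split; [|split; [|split]].
    + intros; apply deriv_re; auto.
    + intros; apply deriv_im; auto.
    + apply grad_norm_sq; auto; lra.
    + apply Rmult_le_compat_l.
      * apply Rmult_le_pos; [nra|apply Rlt_le, Rinv_0_lt_compat; nra].
      * apply grad_ratio_bound; auto.
  - intros; apply gp_lipschitz; auto.
Qed.
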